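(* $$L_{\mathbb{R},2}(\ell_\infty^2)=\sup\left\{\left[2t^{4/3}+2\left(\sqrt{t(1-t)}\right)^{4/3}\right]^{3/4}: t\in[1/2,1]\right\}\approx 1.7700,$$ the supremum being attained at some $t_0\approx 0.9147$. In particular $L_{\mathbb{R},2}\ge 1.7700$.
   Context: All spaces are real. For an $m$-homogeneous polynomial $P$ on a Banach space, $\check P$ denotes its polar (the unique symmetric $m$-linear form with $\check P(x,\dots,x)=P(x)$). For vectors $x_1,\dots,x_N$ in a Banach space $X$, $\|(x_j)_{j=1}^N\|_{w,1}=\sup\{\sum_{j=1}^N|\varphi(x_j)|:\varphi\in X',\|\varphi\|\le1\}$. $L_{\mathbb{R},m}$ denotes the smallest constant $L$ such that for every real Banach space $X$, every continuous $m$-homogeneous polynomial $P:X\to\mathbb{R}$, every $N$ and all $x^{(k)}_j\in X$ ($1\le j\le N$, $1\le k\le m$), $$\Big(\sum_{j_1,\dots,j_m=1}^N|\check P(x^{(1)}_{j_1},\dots,x^{(m)}_{j_m})|^{\frac{2m}{m+1}}\Big)^{\frac{m+1}{2m}}\le L\|P\|\prod_{k=1}^m\|(x^{(k)}_j)_{j=1}^N\|_{w,1}.$$ $\ell_\infty^n$ is $\mathbb{R}^n$ with the sup norm; for a polynomial $P$ on $\ell_\infty^n$, $\|P\|=\sup\{|P(x)|:x\in[-1,1]^n\}$. For $P$ an $m$-homogeneous polynomial on $\ell_\infty^n$ put $\Phi_{m,n}(P)=\big(\sum_{i_1,\dots,i_m=1}^n|\check P(e_{i_1},\dots,e_{i_m})|^{\frac{2m}{m+1}}\big)^{\frac{m+1}{2m}}$,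 and $L_{\mathbb{R},m}(\ell_\infty^n)=\sup\{\Phi_{m,n}(P): P \text{ $m$-homogeneous on } \ell_\infty^n,\ \|P\|\le1\}$. One has $L_{\mathbb{R},m}\ge L_{\mathbb{R},m}(\ell_\infty^n)$ (take $x^{(k)}_j=e_j$). *)

From Stdlib Require Import Reals.
Open Scope R_scope.

(* Real power x^y for x >= 0, y > 0, with the correct convention 0^y = 0
   (Stdlib's Rpower 0 y = 1, which is wrong for our purposes). *)
Definition rpow (x y : R) : R :=
  match Rle_lt_dec x 0 with
  | left _ => 0
  | right _ => Rpower x y
  end.

(* A 2-homogeneous polynomial P on R^2 is determined by its polar, a symmetric
   bilinear form with entries b11 = P^(e1,e1), b12 = b21 = P^(e1,e2),
   b22 = P^(e2,e2); P(x1,x2) = b11 x1^2 + 2 b12 x1 x2 + b22 x2^2. *)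
Definition hpoly2 (b11 b12 b22 x1 x2 : R) : R :=
  b11 * x1 * x1 + 2 * b12 * x1 * x2 + b22 * x2 * x2.

Definition norm_le1 (b11 b12 b22 : R) : Prop :=
  forall x1 x2, -1 <= x1 <= 1 -> -1 <= x2 <= 1 ->
    Rabs (hpoly2 b11 b12 b22 x1 x2) <= 1.

Definition Phi22 (b11 b12 b22 : R) : R :=
  rpow (rpow (Rabs b11) (4/3) + rpow (Rabs b12) (4/3)
        + rpow (Rabs b12) (4/3) + rpow (Rabs b22) (4/3)) (3/4).

(* The set {Phi_{2,2}(P) : P 2-homogeneous on l_inf^2, ||P|| <= 1};
   L_{R,2}(l_inf^2) is its supremum. *)
Definition L22_set (s : R) : Prop :=
  exists b11 b12 b22, norm_le1 b11 b12 b22 /\ s = Phi22 b11 b12 b22.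

Definition fL (t : R) : R :=
  rpow (2 * rpow t (4/3) + 2 * rpow (sqrt (t * (1 - t))) (4/3)) (3/4).

Definition fL_set (s : R) : Prop :=
  exists t, 1/2 <= t <= 1 /\ s = fL t.

From Stdlib Require Import Reals Lra Psatz.
From Coquelicot Require Import Coquelicot.
Open Scope R_scope.

(* For [||P|| <= 1] the coefficients [a = P^(e1,e1)], [b = P^(e1,e2)], [c = P^(e2,e2)]
   satisfy [|a|, |c| <= 1] and [|a + c| + 2|b| <= 1], and, when [a c < 0] and [|b| < |c|],
   also [b^2 <= |c| (1 - |a|)].  Hence either [|a| + 2|b| + |c| <= 2], so the sum of the
   4/3-powers is at most [2 = f(1)^(4/3)], or, with [|c| <= |a|], it is at most
   [2 t^(4/3) + 2 (t (1 - t))^(2/3)] at [t = |a| > 1/2].  Conversely the polynomial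
   [t x^2 + 2 sqrt (t (1 - t)) x y - t y^2] has norm at most 1 and realises [f(t)].
   Writing [t = x^3], [1 - t = y^3] and [r = y / x], the cube of [f(t)^(4/3) / 2] is
   [(1 + r^2)^3 / (1 + r^3)^4], maximal at the root [r0 ~ 0.453397] of [r^3 + 2 r - 1];
   the maximiser is [t0 = 1 / (1 + r0^3) = 1 / (2 - 2 r0)]. *)

Lemma pow_lt_compat_l a b n : 0 <= a < b -> (0 < n)%nat -> a ^ n < b ^ n.
Proof.
  intros [Ha Hab] Hn. destruct n as [|n]; [lia|]. simpl.
  assert (a ^ n <= b ^ n) by (apply pow_incr; lra).
  assert (0 < b ^ n) by (apply pow_lt; lra).
  assert (0 <= a ^ n) by (apply pow_le; lra).
  nra.
Qed.

Lemma pow_le_reg_l a b n : 0 <= b -> (0 < n)%nat -> a ^ n <= b ^ n -> a <= b.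
Proof.
  intros Hb Hn H. destruct (Rle_lt_dec a b) as [|Hba]; [assumption|].
  pose proof (pow_lt_compat_l b a n ltac:(lra) Hn). lra.
Qed.

Lemma pow_lt_reg_l a b n : 0 <= b -> a ^ n < b ^ n -> a < b.
Proof.
  intros Hb H. destruct (Rlt_le_dec a b) as [|Hba]; [assumption|].
  pose proof (pow_incr b a n (conj Hb Hba)). lra.
Qed.

Lemma rpow_Rpower x y : 0 < x -> rpow x y = Rpower x y.
Proof. intros H; unfold rpow; destruct (Rle_lt_dec x 0); [lra|reflexivity]. Qed.

Lemma rpow_nonpos x y : x <= 0 -> rpow x y = 0.
Proof. intros H; unfold rpow; destruct (Rle_lt_dec x 0); [reflexivity|lra]. Qed.

Lemma rpow_ge0 x y : 0 <= rpow x y.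
Proof. unfold rpow; destruct (Rle_lt_dec x 0); [lra|left; apply exp_pos]. Qed.

Lemma rpow_gt0 x y : 0 < x -> 0 < rpow x y.
Proof. intros H. rewrite rpow_Rpower by exact H. apply exp_pos. Qed.

Lemma rpow_le_compat x z y : 0 <= x <= z -> 0 <= y -> rpow x y <= rpow z y.
Proof.
  intros Hxz Hy. destruct (Req_dec x 0) as [->|Hx].
  - rewrite rpow_nonpos by lra. apply rpow_ge0.
  - rewrite !rpow_Rpower by lra. apply Rle_Rpower_l; lra.
Qed.

Lemma rpow_le_self x y : 0 <= x <= 1 -> 1 <= y -> rpow x y <= x.
Proof.
  intros Hx Hy. destruct (Req_dec x 0) as [->|Hx0].
  - rewrite rpow_nonpos by lra. lra.
  - rewrite rpow_Rpower by lra. replace y with (1 + (y - 1)) by ring.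
    rewrite Rpower_plus, Rpower_1 by lra.
    assert (Rpower x (y - 1) <= Rpower 1 (y - 1)) by (apply Rle_Rpower_l; lra).
    assert (Rpower 1 (y - 1) = 1) by (unfold Rpower; rewrite ln_1, Rmult_0_r; apply exp_0).
    pose proof (exp_pos ((y - 1) * ln x)). unfold Rpower in *. nra.
Qed.

Lemma rpow_mult_nat x y n : 0 <= x -> (0 < n)%nat -> rpow x (y * INR n) = rpow x y ^ n.
Proof.
  intros Hx Hn. destruct (Req_dec x 0) as [->|Hx0].
  - rewrite !rpow_nonpos by lra. rewrite pow_i by lia. reflexivity.
  - rewrite !rpow_Rpower by lra. rewrite <- Rpower_mult, Rpower_pow; [reflexivity|].
    apply exp_pos.
Qed.

Lemma rpow_mult_distr x z y : 0 <= x -> 0 <= z -> rpow (x * z) y = rpow x y * rpow z y.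
Proof.
  intros Hx Hz. destruct (Req_dec x 0) as [->|Hx0]; [rewrite Rmult_0_l, !(rpow_nonpos 0) by lra; ring|].
  destruct (Req_dec z 0) as [->|Hz0]; [rewrite Rmult_0_r, !(rpow_nonpos 0) by lra; ring|].
  rewrite !rpow_Rpower by nra. symmetry. apply Rpower_mult_distr; lra.
Qed.

Lemma rpow_sqrt x y : 0 <= x -> rpow (sqrt x) y = rpow x (y / 2).
Proof.
  intros Hx. destruct (Req_dec x 0) as [->|Hx0].
  - rewrite sqrt_0, !rpow_nonpos by lra. reflexivity.
  - rewrite !rpow_Rpower by (try apply sqrt_lt_R0; lra).
    rewrite <- Rpower_sqrt, Rpower_mult by lra. f_equal. field.
Qed.

Lemma rpow_1 x : 0 <= x -> rpow x 1 = x.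
Proof.
  intros Hx. destruct (Req_dec x 0) as [->|Hx0].
  - apply rpow_nonpos. lra.
  - rewrite rpow_Rpower by lra. apply Rpower_1. lra.
Qed.

Lemma rpow_third_cube x : 0 <= x -> rpow x (1/3) ^ 3 = x.
Proof.
  intros Hx. rewrite <- rpow_mult_nat by (auto || lia).
  replace (1/3 * INR 3) with 1 by (simpl; field). apply rpow_1, Hx.
Qed.

Lemma norm_le1_diag a b c : norm_le1 a b c -> Rabs a <= 1 /\ Rabs c <= 1.
Proof.
  intros H. split.
  - generalize (H 1 0 ltac:(lra) ltac:(lra)). unfold hpoly2.
    replace (a * 1 * 1 + 2 * b * 1 * 0 + c * 0 * 0) with a by ring. auto.
  - generalize (H 0 1 ltac:(lra) ltac:(lra)). unfold hpoly2.
    replace (a * 0 * 0 + 2 * b * 0 * 1 + c * 1 * 1) with c by ring. auto.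
Qed.

Lemma norm_le1_trace a b c : norm_le1 a b c -> Rabs (a + c) + 2 * Rabs b <= 1.
Proof.
  intros H. generalize (H 1 1 ltac:(lra) ltac:(lra)) (H 1 (-1) ltac:(lra) ltac:(lra)).
  unfold hpoly2, Rabs; repeat destruct Rcase_abs; intros; lra.
Qed.

Lemma norm_le1_swap a b c : norm_le1 a b c -> norm_le1 c b a.
Proof.
  intros H x1 x2 H1 H2. generalize (H x2 x1 H2 H1). unfold hpoly2.
  replace (a * x2 * x2 + 2 * b * x2 * x1 + c * x1 * x1)
    with (c * x1 * x1 + 2 * b * x1 * x2 + a * x2 * x2) by ring. auto.
Qed.

(* Evaluate at [(1, y)] with [y = -b/c], the point where [x2 |-> P(1, x2)] is extremal. *)
Lemma norm_le1_offdiag_sqr a b c : norm_le1 a b c -> a * c < 0 -> Rabs b < Rabs c ->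
  b * b <= Rabs c * (1 - Rabs a).
Proof.
  intros H Hac Hb.
  assert (Hc : c <> 0) by (intro; subst; lra).
  set (y := - b / c).
  assert (Hy : y * c = - b) by (unfold y; field; auto).
  assert (Hy1 : -1 <= y <= 1).
  { revert Hb. unfold Rabs; repeat destruct Rcase_abs; intros; split; nra. }
  generalize (H 1 y ltac:(lra) Hy1). unfold hpoly2.
  replace (a * 1 * 1 + 2 * b * 1 * y + c * y * y) with (a - c * y * y) by nra.
  replace (b * b) with (y * y * c * c) by nra.
  unfold Rabs; repeat destruct Rcase_abs; intros; nra.
Qed.

Lemma norm_le1_cases a b c : norm_le1 a b c -> Rabs c <= Rabs a ->
  Rabs a + 2 * Rabs b + Rabs c <= 2 \/ (1/2 < Rabs a /\ b * b <= Rabs c * (1 - Rabs a)).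
Proof.
  intros H Hca.
  pose proof (norm_le1_trace _ _ _ H) as Htr.
  pose proof (Rabs_pos a). pose proof (Rabs_pos b). pose proof (Rabs_pos c).
  destruct (Rle_lt_dec 0 (a * c)) as [Hac|Hac].
  { left. assert (Rabs a + Rabs c = Rabs (a + c)).
    { revert Hac. unfold Rabs; repeat destruct Rcase_abs; intros; nra. }
    lra. }
  assert (Hdiff : Rabs a - Rabs c + 2 * Rabs b <= 1).
  { revert Htr Hac. unfold Rabs; repeat destruct Rcase_abs; intros; nra. }
  destruct (Rlt_le_dec (Rabs b) (Rabs c)) as [Hbc|Hcb]; [|left; lra].
  destruct (Rle_lt_dec (Rabs a) (1/2)) as [Ha|Ha]; [left; lra|].
  right. split; [exact Ha|]. exact (norm_le1_offdiag_sqr _ _ _ H Hac Hbc).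
Qed.

Definition Phi22_sum (b11 b12 b22 : R) : R :=
  rpow (Rabs b11) (4/3) + rpow (Rabs b12) (4/3)
  + rpow (Rabs b12) (4/3) + rpow (Rabs b22) (4/3).

Definition fL_rad (t : R) : R := 2 * rpow t (4/3) + 2 * rpow (sqrt (t * (1 - t))) (4/3).

Lemma Phi22E a b c : Phi22 a b c = rpow (Phi22_sum a b c) (3/4).
Proof. reflexivity. Qed.

Lemma fLE t : fL t = rpow (fL_rad t) (3/4).
Proof. reflexivity. Qed.

Lemma Phi22_sum_ge0 a b c : 0 <= Phi22_sum a b c.
Proof.
  unfold Phi22_sum. pose proof (rpow_ge0 (Rabs a) (4/3)).
  pose proof (rpow_ge0 (Rabs b) (4/3)). pose proof (rpow_ge0 (Rabs c) (4/3)). lra.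
Qed.

Lemma fL_rad_ge0 t : 0 <= fL_rad t.
Proof.
  unfold fL_rad. pose proof (rpow_ge0 t (4/3)).
  pose proof (rpow_ge0 (sqrt (t * (1 - t))) (4/3)). lra.
Qed.

Lemma fL_rad1 : fL_rad 1 = 2.
Proof.
  unfold fL_rad. replace (1 * (1 - 1)) with 0 by ring.
  rewrite sqrt_0, (rpow_nonpos 0) by lra. rewrite rpow_Rpower by lra.
  unfold Rpower. rewrite ln_1, Rmult_0_r, exp_0. ring.
Qed.

Lemma Phi22_sum_swap a b c : Phi22_sum c b a = Phi22_sum a b c.
Proof. unfold Phi22_sum. ring. Qed.

Lemma Phi22_sum_le_l1 a b c : Rabs a <= 1 -> Rabs b <= 1 -> Rabs c <= 1 ->
  Phi22_sum a b c <= Rabs a + 2 * Rabs b + Rabs c.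
Proof.
  intros Ha Hb Hc. unfold Phi22_sum.
  pose proof (rpow_le_self (Rabs a) (4/3) (conj (Rabs_pos a) Ha) ltac:(lra)).
  pose proof (rpow_le_self (Rabs b) (4/3) (conj (Rabs_pos b) Hb) ltac:(lra)).
  pose proof (rpow_le_self (Rabs c) (4/3) (conj (Rabs_pos c) Hc) ltac:(lra)).
  lra.
Qed.

Lemma Phi22_sum_le_fL_rad a b c : Rabs a <= 1 -> Rabs c <= Rabs a ->
  b * b <= Rabs c * (1 - Rabs a) -> Phi22_sum a b c <= fL_rad (Rabs a).
Proof.
  intros Ha Hca Hb. pose proof (Rabs_pos b). pose proof (Rabs_pos c).
  assert (Rabs b <= sqrt (Rabs a * (1 - Rabs a))).
  { rewrite <- (sqrt_square (Rabs b)) by lra. apply sqrt_le_1_alt.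
    rewrite <- Rabs_mult, Rabs_pos_eq by nra. nra. }
  assert (rpow (Rabs b) (4/3) <= rpow (sqrt (Rabs a * (1 - Rabs a))) (4/3))
    by (apply rpow_le_compat; lra).
  assert (rpow (Rabs c) (4/3) <= rpow (Rabs a) (4/3)) by (apply rpow_le_compat; lra).
  unfold Phi22_sum, fL_rad. lra.
Qed.

Lemma Phi22_sum_bound_ordered a b c : norm_le1 a b c -> Rabs c <= Rabs a ->
  exists t, 1/2 <= t <= 1 /\ Phi22_sum a b c <= fL_rad t.
Proof.
  intros H Hca. destruct (norm_le1_diag _ _ _ H) as [Ha Hc].
  pose proof (norm_le1_trace _ _ _ H). pose proof (Rabs_pos (a + c)).
  destruct (norm_le1_cases _ _ _ H Hca) as [Hl1|[Ha2 Hb]].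
  - exists 1. split; [lra|]. rewrite fL_rad1.
    pose proof (Phi22_sum_le_l1 a b c Ha ltac:(lra) Hc). lra.
  - exists (Rabs a). split; [lra|]. exact (Phi22_sum_le_fL_rad a b c Ha Hca Hb).
Qed.

Lemma Phi22_sum_bound a b c : norm_le1 a b c ->
  exists t, 1/2 <= t <= 1 /\ Phi22_sum a b c <= fL_rad t.
Proof.
  intros H. destruct (Rle_lt_dec (Rabs c) (Rabs a)).
  - exact (Phi22_sum_bound_ordered a b c H r).
  - rewrite <- Phi22_sum_swap.
    apply Phi22_sum_bound_ordered; [exact (norm_le1_swap _ _ _ H)|lra].
Qed.

Lemma norm_le1_extremal t : 0 < t <= 1 -> norm_le1 t (sqrt (t * (1 - t))) (- t).
Proof.
  intros Ht x y Hx Hy. set (s := sqrt (t * (1 - t))).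
  assert (Hs : s * s = t * (1 - t)) by (apply sqrt_sqrt; nra).
  assert (Hup : t * ((1 - t) * x * x - 2 * s * x * y + t * y * y) = (s * x - t * y) ^ 2) by nra.
  assert (Hlo : t * ((1 - t) * y * y + 2 * s * x * y + t * x * x) = (s * y + t * x) ^ 2) by nra.
  assert (0 <= (1 - t) * x * x - 2 * s * x * y + t * y * y).
  { apply (Rmult_le_reg_l t); [lra|]. rewrite Rmult_0_r, Hup. apply pow2_ge_0. }
  assert (0 <= (1 - t) * y * y + 2 * s * x * y + t * x * x).
  { apply (Rmult_le_reg_l t); [lra|]. rewrite Rmult_0_r, Hlo. apply pow2_ge_0. }
  unfold hpoly2. apply Rabs_le. split; nra.
Qed.

Lemma Phi22_extremal t : 0 <= t -> Phi22 t (sqrt (t * (1 - t))) (- t) = fL t.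
Proof.
  intros Ht. rewrite Phi22E, fLE. unfold Phi22_sum, fL_rad.
  rewrite Rabs_Ropp, !Rabs_pos_eq by (try apply sqrt_pos; lra). f_equal. ring.
Qed.

Lemma L22_set_fL t : 0 < t <= 1 -> L22_set (fL t).
Proof.
  intros Ht. exists t, (sqrt (t * (1 - t))), (- t).
  split; [exact (norm_le1_extremal t Ht)|]. symmetry. apply Phi22_extremal. lra.
Qed.

Lemma L22_set_le_fL s : L22_set s -> exists t, 1/2 <= t <= 1 /\ s <= fL t.
Proof.
  intros [a [b [c [H ->]]]]. destruct (Phi22_sum_bound _ _ _ H) as [t [Ht Hle]].
  exists t. split; [exact Ht|]. rewrite Phi22E, fLE.
  apply rpow_le_compat; [split; [apply Phi22_sum_ge0|exact Hle]|lra].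
Qed.

Lemma fL_pow4 t : fL t ^ 4 = fL_rad t ^ 3.
Proof.
  pose proof (fL_rad_ge0 t). rewrite fLE, <- rpow_mult_nat by (auto || lia).
  replace (3/4 * INR 4) with (1 * INR 3) by (simpl; field).
  rewrite rpow_mult_nat, rpow_1 by (auto || lia). reflexivity.
Qed.

Definition phi (r : R) : R := (1 + r ^ 2) ^ 3 / (1 + r ^ 3) ^ 4.

Definition dphi (r : R) : R := 6 * r * (1 - 2 * r - r ^ 3) * (1 + r ^ 2) ^ 2 / (1 + r ^ 3) ^ 5.

Lemma cube_on_curve_phi x y : 0 < x -> 0 <= y -> x ^ 3 + y ^ 3 = 1 ->
  (x ^ 4 + x ^ 2 * y ^ 2) ^ 3 = phi (y / x).
Proof.
  intros Hx Hy Hxy. unfold phi. set (r := y / x).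
  assert (Hr : 0 <= r) by (apply Rdiv_le_0_compat; lra).
  assert (Hy' : y = r * x) by (unfold r; field; lra).
  rewrite Hy' in Hxy |- *.
  assert (E : x ^ 12 * (1 + r ^ 3) ^ 4 = 1).
  { replace (x ^ 12 * (1 + r ^ 3) ^ 4) with ((x ^ 3 + (r * x) ^ 3) ^ 4) by ring.
    rewrite Hxy. ring. }
  assert (0 < 1 + r ^ 3) by (pose proof (pow_le r 3 Hr); lra).
  apply (Rmult_eq_reg_r ((1 + r ^ 3) ^ 4)); [|apply Rgt_not_eq, pow_lt; lra].
  field_simplify; [|apply Rgt_not_eq; try apply pow_lt; lra].
  transitivity ((1 + r ^ 2) ^ 3 * (x ^ 12 * (1 + r ^ 3) ^ 4)); [ring|]. rewrite E. ring.
Qed.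

Lemma fL_rad_cube t : 0 < t <= 1 ->
  fL_rad t ^ 3 = 8 * phi (rpow (1 - t) (1/3) / rpow t (1/3)).
Proof.
  intros Ht. set (x := rpow t (1/3)). set (y := rpow (1 - t) (1/3)).
  assert (Hx3 : x ^ 3 = t) by (apply rpow_third_cube; lra).
  assert (Hy3 : y ^ 3 = 1 - t) by (apply rpow_third_cube; lra).
  assert (Hx : 0 < x) by (apply rpow_gt0; lra).
  assert (Hy : 0 <= y) by apply rpow_ge0.
  assert (Ht4 : rpow t (4/3) = x ^ 4).
  { unfold x. rewrite <- rpow_mult_nat by (lra || lia). f_equal. simpl. field. }
  assert (Hs4 : rpow (sqrt (t * (1 - t))) (4/3) = x ^ 2 * y ^ 2).
  { rewrite rpow_sqrt, rpow_mult_distr by nra.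
    unfold x, y. rewrite <- !rpow_mult_nat by (lra || lia). f_equal; f_equal; simpl; field. }
  unfold fL_rad. rewrite Ht4, Hs4, <- cube_on_curve_phi by (auto; lra). ring.
Qed.

Lemma phi_derive r : 0 <= r -> is_derive phi r (dphi r).
Proof.
  intros Hr. assert (0 < 1 + r ^ 3) by (pose proof (pow_le r 3 Hr); lra).
  unfold phi, dphi. auto_derive.
  - simpl in *. apply Rgt_not_eq. repeat apply Rmult_lt_0_compat; lra.
  - field. lra.
Qed.

Lemma phi_continuous r : 0 <= r -> continuity_pt phi r.
Proof.
  intros Hr. apply derivable_continuous_pt. exists (dphi r).
  apply is_derive_Reals, phi_derive, Hr.
Qed.

(* The numerator of [dphi] factors through the critical point [r0]:
   [1 - 2 c - c^3 = (r0 - c) (r0^2 + r0 c + c^2 + 2)]. *)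
Lemma dphi_root_factor r0 c : r0 ^ 3 + 2 * r0 - 1 = 0 -> 0 <= c ->
  exists q, 0 <= q /\ dphi c = (r0 - c) * q.
Proof.
  intros Hr0 Hc. assert (0 < 1 + c ^ 3) by (pose proof (pow_le c 3 Hc); lra).
  exists (6 * c * (r0 ^ 2 + r0 * c + c ^ 2 + 2) * (1 + c ^ 2) ^ 2 / (1 + c ^ 3) ^ 5). split.
  - apply Rdiv_le_0_compat; [|apply pow_lt; lra].
    apply Rmult_le_pos; [|apply pow_le; nra].
    apply Rmult_le_pos; [lra|]. nra.
  - unfold dphi.
    replace (1 - 2 * c - c ^ 3) with ((r0 - c) * (r0 ^ 2 + r0 * c + c ^ 2 + 2)) by nra.
    unfold Rdiv. ring.
Qed.

Lemma phi_le_critical r0 r : 0 <= r0 -> r0 ^ 3 + 2 * r0 - 1 = 0 -> 0 <= r -> phi r <= phi r0.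
Proof.
  intros H0 Hr0 Hr.
  assert (Hmin : 0 <= Rmin r r0) by (apply Rmin_glb; lra).
  destruct (MVT_gen phi r r0 dphi) as [c [Hc Hmvt]].
  - intros x Hx. apply phi_derive. lra.
  - intros x Hx. apply phi_continuous. lra.
  - destruct (dphi_root_factor r0 c Hr0 ltac:(lra)) as [q [Hq Hdphi]].
    rewrite Hdphi in Hmvt.
    assert (0 <= (r0 - c) * (r0 - r)).
    { destruct (Rle_dec r r0).
      - rewrite Rmin_left, Rmax_right in Hc by lra. nra.
      - rewrite Rmin_right, Rmax_left in Hc by lra. nra. }
    nra.
Qed.

Definition t_of_ratio (r : R) : R := 1 / (1 + r ^ 3).

Lemma t_of_ratio_range r : 0 <= r -> 0 < t_of_ratio r <= 1.
Proof.
  intros Hr. unfold t_of_ratio. pose proof (pow_le r 3 Hr).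
  assert (Ht : 0 < 1 / (1 + r ^ 3)) by (apply Rdiv_lt_0_compat; lra).
  assert (1 / (1 + r ^ 3) * (1 + r ^ 3) = 1) by (field; lra).
  split; nra.
Qed.

Lemma cube_root_ratio_t_of_ratio r : 0 <= r ->
  rpow (1 - t_of_ratio r) (1/3) / rpow (t_of_ratio r) (1/3) = r.
Proof.
  intros Hr. pose proof (t_of_ratio_range r Hr) as Ht.
  set (x := rpow (t_of_ratio r) (1/3)). set (y := rpow (1 - t_of_ratio r) (1/3)).
  assert (Hx3 : x ^ 3 = t_of_ratio r) by (apply rpow_third_cube; lra).
  assert (Hy3 : y ^ 3 = 1 - t_of_ratio r) by (apply rpow_third_cube; lra).
  assert (Hx : 0 < x) by (apply rpow_gt0; lra).
  assert (Hq : 0 <= y / x) by (apply Rdiv_le_0_compat; [apply rpow_ge0|lra]).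
  assert (Hcube : (y / x) ^ 3 = r ^ 3).
  { replace ((y / x) ^ 3) with (y ^ 3 / x ^ 3) by (field; lra).
    rewrite Hx3, Hy3. unfold t_of_ratio. pose proof (pow_le r 3 Hr). field. lra. }
  apply Rle_antisym; apply (pow_le_reg_l _ _ 3); (lra || lia).
Qed.

Section Maximizer.

Variable r0 : R.
Hypothesis r0_ge0 : 0 <= r0.
Hypothesis r0_critical : r0 ^ 3 + 2 * r0 - 1 = 0.

Lemma fL_rad_cube_le t : 0 < t <= 1 -> fL_rad t ^ 3 <= 8 * phi r0.
Proof.
  intros Ht. rewrite fL_rad_cube by exact Ht.
  assert (Hr : 0 <= rpow (1 - t) (1/3) / rpow t (1/3))
    by (apply Rdiv_le_0_compat; [apply rpow_ge0|apply rpow_gt0; lra]).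
  pose proof (phi_le_critical r0 _ r0_ge0 r0_critical Hr). lra.
Qed.

Lemma fL_rad_cube_at_critical : fL_rad (t_of_ratio r0) ^ 3 = 8 * phi r0.
Proof.
  rewrite fL_rad_cube by exact (t_of_ratio_range r0 r0_ge0).
  rewrite cube_root_ratio_t_of_ratio by exact r0_ge0. reflexivity.
Qed.

Lemma fL_le_critical t : 0 < t <= 1 -> fL t <= fL (t_of_ratio r0).
Proof.
  intros Ht. apply (pow_le_reg_l _ _ 4); [apply rpow_ge0|lia|].
  rewrite !fL_pow4, fL_rad_cube_at_critical. exact (fL_rad_cube_le t Ht).
Qed.

End Maximizer.

Lemma critical_ratio_exists :
  { r0 : R | 453397 / 1000000 <= r0 <= 453398 / 1000000 /\ r0 ^ 3 + 2 * r0 - 1 = 0 }.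
Proof.
  destruct (IVT (fun r => r ^ 3 + 2 * r - 1) (453397 / 1000000) (453398 / 1000000))
    as [r0 Hr0]; [|lra|lra|lra|exists r0; exact Hr0].
  intros x. apply derivable_continuous_pt. exists (3 * x ^ 2 + 2).
  apply is_derive_Reals. auto_derive; [exact I|ring].
Qed.

Section Numerics.

Variable r0 : R.
Hypothesis r0_bounds : 453397 / 1000000 <= r0 <= 453398 / 1000000.
Hypothesis r0_critical : r0 ^ 3 + 2 * r0 - 1 = 0.

Lemma t_of_ratio_critical_bounds :
  914740 / 1000000 < t_of_ratio r0 < 914743 / 1000000.
Proof.
  unfold t_of_ratio. replace (1 + r0 ^ 3) with (2 - 2 * r0) by lra.
  split; apply (Rmult_lt_reg_r (2 - 2 * r0)); try lra; field_simplify; lra.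
Qed.

Lemma fL_critical_bounds :
  176995 / 100000 < fL (t_of_ratio r0) < 177005 / 100000.
Proof.
  set (L := fL (t_of_ratio r0)).
  assert (HL0 : 0 <= L) by apply rpow_ge0.
  assert (HL4 : L ^ 4 * (2 - 2 * r0) ^ 4 = 8 * (1 + r0 ^ 2) ^ 3).
  { unfold L. rewrite fL_pow4, fL_rad_cube_at_critical by lra.
    unfold phi. replace (1 + r0 ^ 3) with (2 - 2 * r0) by lra.
    field. lra. }
  set (lo := 453397 / 1000000) in *. set (hi := 453398 / 1000000) in *.
  assert (Hd : 0 < (2 - 2 * r0) ^ 4) by (apply pow_lt; unfold hi in *; lra).
  assert ((1 + lo ^ 2) ^ 3 <= (1 + r0 ^ 2) ^ 3) by (apply pow_incr; unfold lo in *; nra).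
  assert ((1 + r0 ^ 2) ^ 3 <= (1 + hi ^ 2) ^ 3) by (apply pow_incr; unfold lo, hi in *; nra).
  assert ((2 - 2 * hi) ^ 4 <= (2 - 2 * r0) ^ 4) by (apply pow_incr; unfold hi in *; lra).
  assert ((2 - 2 * r0) ^ 4 <= (2 - 2 * lo) ^ 4) by (apply pow_incr; unfold lo, hi in *; lra).
  assert ((176995 / 100000) ^ 4 * (2 - 2 * lo) ^ 4 < 8 * (1 + lo ^ 2) ^ 3) by (unfold lo; lra).
  assert (8 * (1 + hi ^ 2) ^ 3 < (177005 / 100000) ^ 4 * (2 - 2 * hi) ^ 4) by (unfold hi; lra).
  split; apply (pow_lt_reg_l _ _ 4); try lra;
    apply (Rmult_lt_reg_r ((2 - 2 * r0) ^ 4)); [exact Hd| |exact Hd|].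
  - rewrite HL4.
    assert ((176995 / 100000) ^ 4 * (2 - 2 * r0) ^ 4 <= (176995 / 100000) ^ 4 * (2 - 2 * lo) ^ 4)
      by (apply Rmult_le_compat_l; [apply pow_le|]; lra).
    lra.
  - rewrite HL4.
    assert ((177005 / 100000) ^ 4 * (2 - 2 * hi) ^ 4 <= (177005 / 100000) ^ 4 * (2 - 2 * r0) ^ 4)
      by (apply Rmult_le_compat_l; [apply pow_le|]; lra).
    lra.
Qed.

End Numerics.

Lemma is_lub_of_max (E : R -> Prop) m : (forall s, E s -> s <= m) -> E m -> is_lub E m.
Proof. intros Hub Hm. split; [exact Hub|]. intros M HM. exact (HM m Hm). Qed.

Theorem mainTheorem2 :
  exists L t0 : R,
    is_lub L22_set L /\
    is_lub fL_set L /\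
    1/2 <= t0 <= 1 /\ fL t0 = L /\
    Rabs (t0 - 9147 / 10000) < 5 / 100000 /\
    Rabs (L - 17700 / 10000) < 5 / 100000.
Proof.
  destruct critical_ratio_exists as [r0 [Hr0 Hcrit]].
  pose proof (t_of_ratio_critical_bounds r0 Hr0 Hcrit) as Ht0.
  pose proof (fL_critical_bounds r0 Hr0 Hcrit) as HL.
  set (t0 := t_of_ratio r0) in *.
  assert (Hmax : forall t, 1/2 <= t <= 1 -> fL t <= fL t0)
    by (intros t Ht; apply (fL_le_critical r0); [lra|exact Hcrit|lra]).
  assert (HL22 : is_lub L22_set (fL t0)).
  { apply is_lub_of_max; [|apply L22_set_fL; lra].
    intros s Hs. destruct (L22_set_le_fL s Hs) as [t [Ht Hst]].
    apply (Rle_trans _ _ _ Hst), Hmax, Ht. }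
  assert (HfL : is_lub fL_set (fL t0)).
  { apply is_lub_of_max; [intros s [t [Ht ->]]; exact (Hmax t Ht)|].
    exists t0. split; [lra|reflexivity]. }
  exists (fL t0), t0.
  split; [exact HL22|]. split; [exact HfL|]. split; [lra|]. split; [reflexivity|].
  split; apply Rabs_def1; lra.
Qed.
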